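(* Let $A$ be a functionally continuous normed algebra. Then the following are equivalent: (1) the topology of $A$ is defined by a uniform norm, i.e. a norm $\|\cdot\|$ satisfying $\|x^2\|=\|x\|^2$ for all $x\in A$ (so $A$ is a uniform normed algebra); (2) $A$ has a largest closed, idempotent, absolutely convex, bounded subset, i.e. a closed, idempotent, absolutely convex, bounded subset containing every closed, idempotent, absolutely convex, bounded subset of $A$.
   Context: All algebras are complex, commutative and have a unit. A normed algebra is an algebra with a submultiplicative norm. For a topological algebra $A$, $M^*(A)$ is the set of nonzero multiplicative linear functionals and $M(A)$ the set of nonzero continuous ones; $A$ is functionally continuous if $M^*(A)=M(A)$. A subset $S$ of an algebra is idempotent if $S\cdot S\subseteq S$, i.e. $xy\in S$ for all $x,y\in S$. Bounded means bounded in the normed (topological vector space) sense. *)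

From Stdlib Require Import Reals.
Open Scope R_scope.
Set Implicit Arguments.

Definition C : Type := (R * R)%type.
Definition C0 : C := (0, 0).
Definition C1 : C := (1, 0).
Definition Cadd (a b : C) : C := (fst a + fst b, snd a + snd b).
Definition Cmul (a b : C) : C :=
  (fst a * fst b - snd a * snd b, fst a * snd b + snd a * fst b).
Definition Copp (a : C) : C := (- fst a, - snd a).
Definition Cmod (a : C) : R := sqrt (fst a * fst a + snd a * snd a).

(** * Complex, commutative, unital normed algebras
    (norm submultiplicative; no normalisation of the unit is required). *)
Record normed_algebra : Type := NormedAlgebra {
  car :> Type;
  zero : car;
  one : car;
  add : car -> car -> car;
  opp : car -> car;
  mul : car -> car -> car;
  scal : C -> car -> car;
  norm : car -> R;
  addA : forall x y z, add x (add y z) = add (add x y) z;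
  addC : forall x y, add x y = add y x;
  add0 : forall x, add zero x = x;
  addN : forall x, add x (opp x) = zero;
  scal1 : forall x, scal C1 x = x;
  scalA : forall a b x, scal a (scal b x) = scal (Cmul a b) x;
  scalDr : forall a x y, scal a (add x y) = add (scal a x) (scal a y);
  scalDl : forall a b x, scal (Cadd a b) x = add (scal a x) (scal b x);
  mulA : forall x y z, mul x (mul y z) = mul (mul x y) z;
  mulC : forall x y, mul x y = mul y x;
  mul1 : forall x, mul one x = x;
  mulDl : forall x y z, mul (add x y) z = add (mul x z) (mul y z);
  scal_mul : forall a x y, scal a (mul x y) = mul (scal a x) y;
  norm_eq0 : forall x, norm x = 0 -> x = zero;
  norm_triangle : forall x y, norm (add x y) <= norm x + norm y;
  norm_scal : forall a x, norm (scal a x) = Cmod a * norm x;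
  norm_submult : forall x y, norm (mul x y) <= norm x * norm y
}.

Arguments add {_} _ _.
Arguments opp {_} _.
Arguments mul {_} _ _.
Arguments scal {_} _ _.
Arguments norm {_} _.

Section Notions.
Variable A : normed_algebra.

Definition sub (x y : A) : A := add x (opp y).

Definition open_for (N : A -> R) (U : A -> Prop) : Prop :=
  forall x, U x -> exists r, 0 < r /\ forall y, N (sub y x) < r -> U y.

Definition is_open (U : A -> Prop) : Prop := open_for (@norm A) U.
Definition is_closed (S : A -> Prop) : Prop := is_open (fun x => ~ S x).

Definition is_vs_norm (N : A -> R) : Prop :=
  (forall x, N x = 0 -> x = zero A) /\
  (forall x y, N (add x y) <= N x + N y) /\
  (forall a x, N (scal a x) = Cmod a * N x).

Definition uniform_norm (N : A -> R) : Prop :=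
  is_vs_norm N /\ forall x, N (mul x x) = N x * N x.

Definition topology_defined_by_uniform_norm : Prop :=
  exists N : A -> R, uniform_norm N /\
    forall U : A -> Prop, is_open U <-> open_for N U.

Definition multiplicative_linear (f : A -> C) : Prop :=
  (forall x y, f (add x y) = Cadd (f x) (f y)) /\
  (forall a x, f (scal a x) = Cmul a (f x)) /\
  (forall x y, f (mul x y) = Cmul (f x) (f y)).

Definition nonzero_fun (f : A -> C) : Prop := exists x, f x <> C0.

Definition continuous_fun (f : A -> C) : Prop :=
  forall x eps, 0 < eps -> exists delta, 0 < delta /\
    forall y, norm (sub y x) < delta -> Cmod (Cadd (f y) (Copp (f x))) < eps.

Definition functionally_continuous : Prop :=
  forall f : A -> C, multiplicative_linear f -> nonzero_fun f -> continuous_fun f.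

Definition idempotent (S : A -> Prop) : Prop :=
  forall x y, S x -> S y -> S (mul x y).

Definition absolutely_convex (S : A -> Prop) : Prop :=
  forall x y a b, S x -> S y -> Cmod a + Cmod b <= 1 ->
    S (add (scal a x) (scal b y)).

Definition bounded (S : A -> Prop) : Prop :=
  exists M, forall x, S x -> norm x <= M.

Definition good_set (S : A -> Prop) : Prop :=
  is_closed S /\ idempotent S /\ absolutely_convex S /\ bounded S.

Definition has_largest_good_set : Prop :=
  exists S, good_set S /\ forall T, good_set T -> forall x, T x -> S x.

End Notions.

(** (1) => (2).  If a uniform norm N defines the topology, it is equivalent
    to the given norm (two norms with the same topology bound each other).
    Since N(x^(2^k)) = N(x)^(2^k), the unit ball {N <= 1} is exactly the set
    of x whose iterated squares x^(2^k) stay bounded.  This description shows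
    that {N <= 1} is idempotent and contains every good set, because a good
    set is closed under squaring and bounded; it is clearly closed,
    absolutely convex and bounded.

    (2) => (1).  Let S be the largest good set and p its Minkowski gauge.
    Absolute convexity makes p a seminorm, boundedness of S gives
    ||x|| <= M p(x) and idempotency gives p(x^2) <= p(x)^2.  The converse
    p(x)^2 <= p(x^2) comes from maximality: any y with bounded powers lies in
    S, because the multiplier set {z | z W <= W} of the set
    W = {w | ||w y^n|| <= 1 for all n} is a good set containing y.  Hence
    S contains the open unit ball (so p <= ||.||) and every y with y^2 in S. *)

From Stdlib Require Import Reals Lra Lia Psatz Classical.
From Coquelicot Require Import Rbar Lub.
Open Scope R_scope.

Definition rs (c : R) : C := (c, 0).

Lemma Cmod_rs c : Cmod (rs c) = Rabs c.
Proof. unfold Cmod, rs; simpl. rewrite Rmult_0_l, Rplus_0_r. apply sqrt_Rsqr_abs. Qed.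

Lemma Cmod_ge0 a : 0 <= Cmod a.
Proof. apply sqrt_pos. Qed.

Lemma Cmod_mul a b : Cmod (Cmul a b) = Cmod a * Cmod b.
Proof.
  unfold Cmod, Cmul; destruct a as [a1 a2], b as [b1 b2]; simpl.
  rewrite <- sqrt_mult by nra. f_equal. ring.
Qed.

Lemma Cmod_C0 : Cmod C0 = 0.
Proof. unfold Cmod, C0; simpl. rewrite Rmult_0_l, Rplus_0_r. apply sqrt_0. Qed.

Lemma Cmod_C1 : Cmod C1 = 1.
Proof. unfold Cmod, C1; simpl. rewrite Rmult_0_l, Rplus_0_r, Rmult_1_l. apply sqrt_1. Qed.

Definition Cinv (a : C) : C :=
  (fst a / (fst a * fst a + snd a * snd a), - snd a / (fst a * fst a + snd a * snd a)).

Lemma Cinv_l a : a <> C0 -> Cmul (Cinv a) a = C1.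
Proof.
  destruct a as [a1 a2]; intro H; unfold Cmul, Cinv, C1; simpl.
  assert (a1 * a1 + a2 * a2 <> 0).
  { intro E. apply H. unfold C0. f_equal; nra. }
  f_equal; field; auto.
Qed.

Lemma Rle_of_forall_gt a b : (forall t, a < t -> b <= t) -> b <= a.
Proof. intro H. destruct (Rle_dec b a); auto. specialize (H ((a + b) / 2)). lra. Qed.

Lemma Rle_mult_of_forall_gt a b M :
  0 < M -> (forall t, a < t -> b <= M * t) -> b <= M * a.
Proof.
  intros HM H. assert (b / M <= a).
  { apply Rle_of_forall_gt. intros t Ht. specialize (H t Ht).
    apply Rmult_le_reg_l with M; auto. field_simplify; lra. }
  apply Rmult_le_compat_l with (r := M) in H0; [|lra]. field_simplify in H0; lra.
Qed.

Lemma Rle_square_of_forall_gt a b :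
  0 <= a -> (forall t, a < t -> b <= t * t) -> b <= a * a.
Proof.
  intros Ha H. destruct (Rle_dec b (a * a)); auto. exfalso.
  assert (Hb : 0 <= b) by nra.
  set (s := sqrt b). assert (Hs : s * s = b) by (apply sqrt_sqrt; auto).
  assert (Hs0 : 0 <= s) by apply sqrt_pos.
  assert (a < s) by nra.
  specialize (H ((a + s) / 2) ltac:(lra)). nra.
Qed.

Lemma Glb_upward_closed (E : R -> Prop) :
  (exists t, E t) -> (forall t, E t -> 0 < t) -> (forall t t', E t -> t < t' -> E t') ->
  0 <= real (Glb_Rbar E) /\ (forall t, E t -> real (Glb_Rbar E) <= t) /\
  (forall t, real (Glb_Rbar E) < t -> E t).
Proof.
  intros [t0 Ht0] Hpos Hup.
  destruct (Glb_Rbar_correct E) as [Hlb Hgl].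
  destruct (Glb_Rbar E) as [g| |] eqn:Eg.
  - simpl. split; [|split].
    + assert (Rbar_le (Finite 0) (Finite g)).
      { apply Hgl. intros x Hx. simpl. left. auto. }
      exact H.
    + intros t Ht. exact (Hlb t Ht).
    + intros t Ht. apply NNPP. intro Hn.
      assert (Rbar_le (Finite t) (Finite g)).
      { apply Hgl. intros x Hx. simpl. destruct (Rle_dec t x) as [|Hlt]; auto.
        exfalso. apply Hn. apply (Hup x t Hx). lra. }
      simpl in H. lra.
  - exfalso. exact (Hlb t0 Ht0).
  - exfalso. assert (Rbar_le (Finite 0) m_infty).
    { apply Hgl. intros x Hx. simpl. left. auto. }
    exact H.
Qed.

Lemma le1_of_bounded_2powers a K : 0 <= a -> (forall k, a ^ (2 ^ k) <= K) -> a <= 1.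
Proof.
  intros Ha H. destruct (Rle_dec a 1) as [|Hgt]; [assumption|exfalso].
  destruct (Pow_x_infinity a) with (b := K + 1) as [N HN].
  { rewrite Rabs_pos_eq; lra. }
  assert (Hexp : forall n, (n < 2 ^ n)%nat) by (intro n; induction n; simpl; lia).
  specialize (HN (2 ^ N)%nat (Nat.lt_le_incl _ _ (Hexp N))). specialize (H N).
  rewrite Rabs_pos_eq in HN by (apply pow_le; lra). lra.
Qed.

Section Algebra.
Variable A : normed_algebra.

Lemma A_ring : ring_theory (zero A) (one A) (@add A) (@mul A) (sub A) (@opp A) eq.
Proof.
  constructor; intros.
  - apply add0.
  - apply addC.
  - apply addA.
  - apply mul1.
  - apply mulC.
  - apply mulA.
  - apply mulDl.
  - reflexivity.
  - apply addN.
Qed.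

Add Ring A_ring : A_ring.

Lemma scal0 (x : A) : scal C0 x = zero A.
Proof.
  assert (H : scal C0 x = add (scal C0 x) (scal C0 x)).
  { rewrite <- scalDl. f_equal. unfold Cadd, C0; simpl. f_equal; ring. }
  transitivity (add (scal C0 x) (opp (scal C0 x))); [|apply addN].
  rewrite H at 2. ring.
Qed.

Lemma scal_m1 (x : A) : scal (rs (-1)) x = opp x.
Proof.
  assert (H : add x (scal (rs (-1)) x) = zero A).
  { rewrite <- (scal1 A x) at 1. rewrite <- scalDl.
    replace (Cadd C1 (rs (-1))) with C0 by (unfold Cadd, C1, C0, rs; simpl; f_equal; ring).
    apply scal0. }
  transitivity (add (add x (scal (rs (-1)) x)) (opp x)); [ring | rewrite H; ring].
Qed.

Lemma scal_mulr a (x y : A) : mul x (scal a y) = scal a (mul x y).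
Proof. rewrite (mulC A x), <- scal_mul, (mulC A y). reflexivity. Qed.

Lemma scal_mull a (x y : A) : mul (scal a x) y = scal a (mul x y).
Proof. rewrite scal_mul. reflexivity. Qed.

Lemma scal_rsM a b (x : A) : scal (rs a) (scal (rs b) x) = scal (rs (a * b)) x.
Proof. rewrite scalA. f_equal. unfold Cmul, rs; simpl. f_equal; ring. Qed.

Lemma absconv_scal (T : A -> Prop) u y :
  absolutely_convex A T -> T y -> Cmod u <= 1 -> T (scal u y).
Proof.
  intros H Hy Hu. specialize (H y y u C0 Hy Hy). rewrite Cmod_C0, scal0 in H.
  replace (scal u y) with (add (scal u y) (zero A)) by ring. apply H. lra.
Qed.

Section VectorNorm.
Variable F : A -> R.
Hypothesis HF : is_vs_norm A F.

Lemma F0 : F (zero A) = 0.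
Proof. destruct HF as [_ [_ H3]]. rewrite <- (scal0 (zero A)), H3, Cmod_C0. ring. Qed.

Lemma Fopp x : F (opp x) = F x.
Proof. destruct HF as [_ [_ H3]]. rewrite <- scal_m1, H3, Cmod_rs, Rabs_left by lra. ring. Qed.

Lemma Fge0 x : 0 <= F x.
Proof.
  destruct HF as [_ [H2 _]]. pose proof (H2 x (opp x)) as H.
  rewrite addN, F0, Fopp in H. lra.
Qed.

Lemma Fsub_sym x y : F (sub A x y) = F (sub A y x).
Proof. replace (sub A x y) with (opp (sub A y x)) by (unfold sub; ring). apply Fopp. Qed.

Lemma Frs c x : F (scal (rs c) x) = Rabs c * F x.
Proof. destruct HF as [_ [_ H3]]. rewrite H3, Cmod_rs. reflexivity. Qed.

Lemma Fsub_tri x y : F y <= F x + F (sub A y x).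
Proof.
  destruct HF as [_ [H2 _]].
  replace y with (add x (sub A y x)) at 1 by (unfold sub; ring). apply H2.
Qed.

Lemma F_ball_open : open_for A F (fun z => F z < 1).
Proof.
  intros x Hx. exists (1 - F x). split; [lra|]. intros y Hy. pose proof (Fsub_tri x y). lra.
Qed.

Lemma F_ball_complement_open c : 0 <= c -> open_for A F (fun z => ~ F z <= c).
Proof.
  intros Hc x Hx. exists (F x - c). split; [lra|]. intros y Hy.
  pose proof (Fsub_tri y x). rewrite Fsub_sym in H. lra.
Qed.

Lemma F_ball_absconv : absolutely_convex A (fun z => F z <= 1).
Proof.
  intros x y a b Hx Hy Hab. destruct HF as [_ [HT HS]].
  eapply Rle_trans; [apply HT|]. rewrite !HS.
  pose proof (Cmod_ge0 a). pose proof (Cmod_ge0 b). nra.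
Qed.

End VectorNorm.

Lemma norm_vs : is_vs_norm A (@norm A).
Proof. split; [apply norm_eq0 | split; [apply norm_triangle | apply norm_scal]]. Qed.

Lemma norm_ge0 (x : A) : 0 <= norm x.
Proof. apply (Fge0 _ norm_vs). Qed.

Lemma norm_bound_of_finer_topology (F G : A -> R) :
  is_vs_norm A F -> is_vs_norm A G -> (forall U, open_for A F U -> open_for A G U) ->
  exists c, 0 < c /\ forall y, F y <= c * G y.
Proof.
  intros HF HG Hopen.
  destruct (Hopen _ (F_ball_open F HF) (zero A)) as [r [Hr Hball]].
  { rewrite (F0 F HF). lra. }
  exists (2 / r). split; [apply Rdiv_lt_0_compat; lra|]. intro y.
  destruct (Req_dec (G y) 0) as [E|E].
  { rewrite ((proj1 HG) y E), (F0 F HF), (F0 G HG). lra. }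
  pose proof (Fge0 G HG y). set (l := r / (2 * G y)).
  assert (Hl : 0 < l) by (unfold l; apply Rdiv_lt_0_compat; lra).
  assert (Hly : F (scal (rs l) y) < 1).
  { apply Hball. replace (sub A (scal (rs l) y) (zero A)) with (scal (rs l) y)
      by (unfold sub; ring).
    rewrite (Frs G HG), Rabs_pos_eq by lra. unfold l. field_simplify; lra. }
  rewrite (Frs F HF), Rabs_pos_eq in Hly by lra. unfold l in Hly.
  apply Rmult_lt_compat_l with (r := 2 * G y / r) in Hly;
    [|apply Rdiv_lt_0_compat; lra].
  replace (2 * G y / r * (r / (2 * G y) * F y)) with (F y) in Hly by (field; lra). lra.
Qed.

Lemma open_for_of_bound (F G : A -> R) c (U : A -> Prop) :
  0 < c -> (forall y, G y <= c * F y) -> open_for A G U -> open_for A F U.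
Proof.
  intros Hc Hb HU x Hx. destruct (HU x Hx) as [r [Hr Hball]].
  exists (r / c). split; [apply Rdiv_lt_0_compat; lra|]. intros y Hy. apply Hball.
  pose proof (Hb (sub A y x)). apply Rmult_lt_compat_l with (r := c) in Hy; [|lra].
  replace (c * (r / c)) with r in Hy by (field; lra). lra.
Qed.

Fixpoint sq (k : nat) (z : A) : A :=
  match k with O => z | S k => mul (sq k z) (sq k z) end.

Fixpoint pw (y : A) (n : nat) : A :=
  match n with O => one A | S n => mul y (pw y n) end.

Lemma sq_mul k (x y : A) : sq k (mul x y) = mul (sq k x) (sq k y).
Proof. induction k; simpl; [reflexivity|]. rewrite IHk. ring. Qed.

Lemma sq_in (T : A -> Prop) : idempotent A T -> forall k z, T z -> T (sq k z).
Proof. intros H k z Hz. induction k; simpl; auto. Qed.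

Lemma pw_in (T : A -> Prop) z k : idempotent A T -> T z -> T (pw z (S k)).
Proof.
  intros HT Hz. induction k.
  - simpl. rewrite (mulC A z), mul1. exact Hz.
  - simpl pw. simpl pw in IHk. apply HT; auto.
Qed.

Lemma pw_double (y : A) k : pw y (k + k) = pw (mul y y) k.
Proof.
  induction k; [reflexivity|].
  replace (S k + S k)%nat with (S (S (k + k))) by lia.
  simpl pw. rewrite IHk. ring.
Qed.

Lemma F_sq (F : A -> R) : (forall x, F (mul x x) = F x * F x) ->
  forall k z, F (sq k z) = F z ^ (2 ^ k).
Proof.
  intros H k z. induction k; simpl; [ring|].
  rewrite H, IHk, Nat.add_0_r, pow_add. reflexivity.
Qed.

Section UniformBall.
Variable N : A -> R.
Hypothesis HN : uniform_norm A N.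
Variables c1 c2 : R.
Hypothesis Hc1 : 0 < c1.
Hypothesis Hc2 : 0 < c2.
Hypothesis norm_le_N : forall y, norm y <= c1 * N y.
Hypothesis N_le_norm : forall y, N y <= c2 * norm y.

Lemma uniform_ball_iff x : N x <= 1 <-> exists K, forall k, norm (sq k x) <= K.
Proof.
  destruct HN as [HNvs HNsq]. pose proof (Fge0 N HNvs x) as Hx0. split.
  - intro Hx. exists c1. intro k. rewrite <- (Rmult_1_r c1).
    eapply Rle_trans; [apply norm_le_N|]. apply Rmult_le_compat_l; [lra|].
    rewrite (F_sq N HNsq). rewrite <- (pow1 (2 ^ k)). apply pow_incr. lra.
  - intros [K HK]. apply (le1_of_bounded_2powers (N x) (c2 * K)); [exact Hx0|].
    intro k. rewrite <- (F_sq N HNsq). eapply Rle_trans; [apply N_le_norm|].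
    apply Rmult_le_compat_l; [lra | apply HK].
Qed.

Lemma uniform_ball_idempotent : idempotent A (fun z => N z <= 1).
Proof.
  intros x y Hx Hy. apply uniform_ball_iff.
  destruct (proj1 (uniform_ball_iff x) Hx) as [Kx HKx].
  destruct (proj1 (uniform_ball_iff y) Hy) as [Ky HKy].
  exists (Kx * Ky). intro k. rewrite sq_mul.
  eapply Rle_trans; [apply norm_submult|].
  pose proof (norm_ge0 (sq k x)). pose proof (norm_ge0 (sq k y)).
  apply Rmult_le_compat; auto.
Qed.

Lemma uniform_ball_largest T : good_set A T -> forall x, T x -> N x <= 1.
Proof.
  intros [_ [HTi [_ [M HM]]]] x Hx. apply uniform_ball_iff.
  exists M. intro k. apply HM, sq_in; auto.
Qed.

End UniformBall.

Theorem uniform_norm_has_largest_good_set :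
  topology_defined_by_uniform_norm A -> has_largest_good_set A.
Proof.
  intros [N [HN Htop]]. pose proof (proj1 HN) as HNvs.
  destruct (norm_bound_of_finer_topology _ _ norm_vs HNvs (fun U => proj1 (Htop U)))
    as [c1 [Hc1 Hle1]].
  destruct (norm_bound_of_finer_topology _ _ HNvs norm_vs (fun U => proj2 (Htop U)))
    as [c2 [Hc2 Hle2]].
  exists (fun x => N x <= 1). split; [split; [|split; [|split]]|].
  - apply Htop, F_ball_complement_open; [exact HNvs | lra].
  - exact (uniform_ball_idempotent N HN c1 c2 Hc1 Hc2 Hle1 Hle2).
  - exact (F_ball_absconv N HNvs).
  - exists c1. intros x Hx. pose proof (Hle1 x). nra.
  - exact (uniform_ball_largest N HN c1 c2 Hc1 Hc2 Hle1 Hle2).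
Qed.

Lemma bounded_pos (T : A -> Prop) :
  bounded A T -> exists M, 0 < M /\ forall x, T x -> norm x <= M.
Proof.
  intros [M0 HM0]. exists (Rabs M0 + 1). split; [pose proof (Rabs_pos M0); lra|].
  intros x Hx. pose proof (HM0 x Hx). pose proof (Rle_abs M0). lra.
Qed.

Section Gauge.
Variable B : A -> Prop.

Definition gauge_set (x : A) (t : R) : Prop := 0 < t /\ B (scal (rs (/ t)) x).
Definition gauge (x : A) : R := real (Glb_Rbar (gauge_set x)).

Hypothesis B_absconv : absolutely_convex A B.
Hypothesis B_ball : forall y, norm y < 1 -> B y.

Lemma gauge_set_of_norm x t : norm x < t -> gauge_set x t.
Proof.
  intro Ht. pose proof (norm_ge0 x). split; [lra|]. apply B_ball.
  rewrite norm_scal, Cmod_rs, Rabs_pos_eq by (left; apply Rinv_0_lt_compat; lra).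
  apply Rmult_lt_reg_l with t; [lra|]. rewrite <- Rmult_assoc, Rinv_r by lra. lra.
Qed.

Lemma gauge_spec x :
  0 <= gauge x /\ (forall t, gauge_set x t -> gauge x <= t) /\
  (forall t, gauge x < t -> gauge_set x t).
Proof.
  apply Glb_upward_closed.
  - exists (norm x + 1). apply gauge_set_of_norm. lra.
  - intros t [Ht _]; exact Ht.
  - intros t t' [Ht HBt] Htt'. split; [lra|].
    replace (scal (rs (/ t')) x) with (scal (rs (t / t')) (scal (rs (/ t)) x))
      by (rewrite scal_rsM; do 2 f_equal; field; lra).
    apply absconv_scal; auto. rewrite Cmod_rs, Rabs_pos_eq.
    + apply Rmult_le_reg_l with t'; [lra|]. field_simplify; lra.
    + apply Rlt_le, Rdiv_lt_0_compat; lra.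
Qed.

Lemma gauge_ge0 x : 0 <= gauge x.
Proof. apply gauge_spec. Qed.
Lemma gauge_le x t : gauge_set x t -> gauge x <= t.
Proof. apply gauge_spec. Qed.
Lemma gauge_gt x t : gauge x < t -> gauge_set x t.
Proof. apply gauge_spec. Qed.

Lemma gauge_le_norm x : gauge x <= norm x.
Proof. apply Rle_of_forall_gt. intros t Ht. apply gauge_le, gauge_set_of_norm, Ht. Qed.

Lemma gauge_tri x y : gauge (add x y) <= gauge x + gauge y.
Proof.
  apply Rle_of_forall_gt. intros t Ht. set (d := t - gauge x - gauge y).
  destruct (gauge_gt x (gauge x + d / 2)) as [Ht1 H1]; [unfold d; lra|].
  destruct (gauge_gt y (gauge y + d / 2)) as [Ht2 H2]; [unfold d; lra|].
  set (t1 := gauge x + d / 2) in *. set (t2 := gauge y + d / 2) in *.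
  replace t with (t1 + t2) by (unfold t1, t2, d; lra).
  apply gauge_le. split; [lra|].
  replace (scal (rs (/ (t1 + t2))) (add x y)) with
    (add (scal (rs (t1 / (t1 + t2))) (scal (rs (/ t1)) x))
         (scal (rs (t2 / (t1 + t2))) (scal (rs (/ t2)) y)))
    by (rewrite !scal_rsM, scalDr; f_equal; do 2 f_equal; field; lra).
  apply B_absconv; auto. rewrite !Cmod_rs, !Rabs_pos_eq.
  - right. field. lra.
  - apply Rlt_le, Rdiv_lt_0_compat; lra.
  - apply Rlt_le, Rdiv_lt_0_compat; lra.
Qed.

Lemma gauge_scal_le a x : gauge (scal a x) <= Cmod a * gauge x.
Proof.
  apply Rle_of_forall_gt. intros s Hs.
  pose proof (Cmod_ge0 a) as Ha. pose proof (gauge_ge0 x) as Hp.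
  set (d := (s - Cmod a * gauge x) / (Cmod a + 1)).
  assert (Hd : 0 < d) by (unfold d; apply Rdiv_lt_0_compat; lra).
  assert (Hd2 : Cmod a * d < s - Cmod a * gauge x).
  { unfold d. apply Rmult_lt_reg_r with (Cmod a + 1); [lra|]. field_simplify; nra. }
  destruct (gauge_gt x (gauge x + d)) as [Ht HBt]; [lra|].
  set (t := gauge x + d) in *.
  assert (Hs0 : 0 < s) by nra.
  apply gauge_le. split; [lra|].
  replace (scal (rs (/ s)) (scal a x))
    with (scal (Cmul (Cmul (rs (/ s)) a) (rs t)) (scal (rs (/ t)) x)).
  2:{ rewrite !scalA. f_equal. destruct a as [a1 a2]. unfold Cmul, rs; simpl.
      f_equal; field; lra. }
  apply absconv_scal; auto.
  rewrite !Cmod_mul, !Cmod_rs, (Rabs_pos_eq t) by lra.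
  rewrite (Rabs_pos_eq (/ s)) by (left; apply Rinv_0_lt_compat; lra).
  apply Rmult_le_reg_l with s; [lra|]. rewrite <- !Rmult_assoc, Rinv_r by lra.
  unfold t. nra.
Qed.

Lemma gauge_scal a x : gauge (scal a x) = Cmod a * gauge x.
Proof.
  apply Rle_antisym; [apply gauge_scal_le|].
  destruct (Req_dec (Cmod a) 0) as [E|E].
  { rewrite E, Rmult_0_l. apply gauge_ge0. }
  assert (Ha : a <> C0) by (intro; subst; apply E, Cmod_C0).
  assert (Hm : Cmod a * Cmod (Cinv a) = 1)
    by (rewrite Rmult_comm, <- Cmod_mul, Cinv_l, Cmod_C1; auto).
  pose proof (gauge_scal_le (Cinv a) (scal a x)) as H.
  rewrite scalA, Cinv_l, scal1 in H by auto.
  apply Rmult_le_compat_l with (r := Cmod a) in H; [|apply Cmod_ge0].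
  rewrite <- Rmult_assoc, Hm, Rmult_1_l in H. exact H.
Qed.

Lemma norm_le_gauge M : 0 < M -> (forall x, B x -> norm x <= M) ->
  forall x, norm x <= M * gauge x.
Proof.
  intros HM0 HM x. apply Rle_mult_of_forall_gt; auto. intros t Ht.
  destruct (gauge_gt x t Ht) as [Ht0 HBt].
  apply HM in HBt. rewrite norm_scal, Cmod_rs in HBt.
  rewrite Rabs_pos_eq in HBt by (left; apply Rinv_0_lt_compat; lra).
  apply Rmult_le_compat_l with (r := t) in HBt; [|lra].
  rewrite <- Rmult_assoc, Rinv_r in HBt by lra. lra.
Qed.

Lemma gauge_sq_le : idempotent A B -> forall x, gauge (mul x x) <= gauge x * gauge x.
Proof.
  intros HBi x. apply Rle_square_of_forall_gt; [apply gauge_ge0|]. intros t Ht.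
  destruct (gauge_gt x t Ht) as [Ht0 HBt].
  apply gauge_le. split; [nra|].
  replace (scal (rs (/ (t * t))) (mul x x))
    with (mul (scal (rs (/ t)) x) (scal (rs (/ t)) x))
    by (rewrite scal_mull, scal_mulr, scal_rsM; do 2 f_equal; field; lra).
  apply HBi; auto.
Qed.

End Gauge.

(** For y with bounded powers, W = {w | ||w y^n|| <= 1 for all n} and its
    multiplier set {z | z W <= W}.  The latter is a good set containing y. *)
Section Multipliers.
Variable y : A.

Definition power_absorbed (w : A) : Prop := forall n, norm (mul w (pw y n)) <= 1.
Definition multipliers (z : A) : Prop :=
  forall w, power_absorbed w -> power_absorbed (mul z w).

Lemma multipliers_contain_y : multipliers y.
Proof.
  intros w Hw n.
  replace (mul (mul y w) (pw y n)) with (mul w (pw y (S n))) by (simpl; ring).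
  apply Hw.
Qed.

(** The complement is open: if ||z q|| > 1 for q = w y^n, the same holds
    near z since z' |-> z' q is continuous. *)
Lemma multipliers_closed : is_closed A multipliers.
Proof.
  intros z Hz.
  apply not_all_ex_not in Hz as [w Hw]. apply imply_to_and in Hw as [Hw Hzw].
  apply not_all_ex_not in Hzw as [n Hn]. apply Rnot_le_lt in Hn.
  set (q := mul w (pw y n)). assert (Hq : norm q <= 1) by apply Hw.
  replace (mul (mul z w) (pw y n)) with (mul z q) in Hn by (unfold q; ring).
  exists (norm (mul z q) - 1). split; [lra|]. intros z' Hz' Hmz'.
  specialize (Hmz' w Hw n).
  replace (mul (mul z' w) (pw y n)) with (mul z' q) in Hmz' by (unfold q; ring).
  pose proof (Fsub_tri _ norm_vs (mul z' q) (mul z q)) as Htri.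
  replace (sub A (mul z q) (mul z' q)) with (mul (sub A z z') q) in Htri
    by (unfold sub; ring).
  pose proof (norm_submult A (sub A z z') q).
  rewrite (Fsub_sym _ norm_vs) in H. pose proof (norm_ge0 (sub A z' z)). nra.
Qed.

Lemma multipliers_idempotent : idempotent A multipliers.
Proof.
  intros z1 z2 H1 H2 w Hw.
  replace (mul (mul z1 z2) w) with (mul z1 (mul z2 w)) by ring. auto.
Qed.

Lemma multipliers_absconv : absolutely_convex A multipliers.
Proof.
  intros z1 z2 a b H1 H2 Hab w Hw n.
  replace (mul (mul (add (scal a z1) (scal b z2)) w) (pw y n))
    with (add (scal a (mul (mul z1 w) (pw y n))) (scal b (mul (mul z2 w) (pw y n))))
    by (rewrite !mulDl, !scal_mull; reflexivity).
  eapply Rle_trans; [apply norm_triangle|]. rewrite !norm_scal.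
  pose proof (H1 w Hw n). pose proof (H2 w Hw n).
  pose proof (Cmod_ge0 a). pose proof (Cmod_ge0 b). nra.
Qed.

(** With ||y^(n+1)|| <= K, the scalar 1/K' (K' = K + ||1|| + 1) lies in W,
    so every multiplier z satisfies ||z|| <= K'. *)
Lemma multipliers_bounded K :
  (forall n, norm (pw y (S n)) <= K) -> bounded A multipliers.
Proof.
  intro HK. pose proof (norm_ge0 (one A)).
  set (K' := K + norm (one A) + 1).
  assert (HK0 : 0 <= K) by (pose proof (HK O); pose proof (norm_ge0 (pw y 1)); lra).
  assert (HK' : 0 < / K') by (apply Rinv_0_lt_compat; unfold K'; lra).
  set (w0 := scal (rs (/ K')) (one A)).
  assert (Hw0 : power_absorbed w0).
  { intro n. unfold w0.
    rewrite scal_mull, mul1, norm_scal, Cmod_rs, Rabs_pos_eq by lra.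
    assert (norm (pw y n) <= K').
    { destruct n; [simpl pw; unfold K'; lra|]. pose proof (HK n). unfold K'. lra. }
    apply Rmult_le_reg_l with K'; [unfold K'; lra|].
    rewrite <- Rmult_assoc, Rinv_r by (unfold K'; lra). lra. }
  exists K'. intros z Hz. specialize (Hz w0 Hw0 O).
  replace (mul (mul z w0) (pw y O)) with (scal (rs (/ K')) z) in Hz
    by (unfold w0; simpl pw; rewrite (mulC A _ (one A)), mul1, scal_mulr, (mulC A z), mul1;
        reflexivity).
  rewrite norm_scal, Cmod_rs, Rabs_pos_eq in Hz by lra.
  apply Rmult_le_compat_l with (r := K') in Hz; [|unfold K'; lra].
  rewrite <- Rmult_assoc, Rinv_r in Hz by (unfold K'; lra). lra.
Qed.

End Multipliers.

Section Largest.
Variable L : A -> Prop.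
Hypothesis HL : good_set A L.
Hypothesis L_max : forall T, good_set A T -> forall x, T x -> L x.

Lemma bounded_powers_in_largest y K : (forall n, norm (pw y (S n)) <= K) -> L y.
Proof.
  intro HK. apply (L_max (multipliers y)); [|apply multipliers_contain_y].
  split; [apply multipliers_closed | split; [apply multipliers_idempotent | split]].
  - apply multipliers_absconv.
  - exact (multipliers_bounded y K HK).
Qed.

Lemma ball_in_largest y : norm y < 1 -> L y.
Proof.
  intro Hy. apply (bounded_powers_in_largest y 1). induction n.
  - simpl. rewrite (mulC A y), mul1. lra.
  - simpl pw. simpl pw in IHn. eapply Rle_trans; [apply norm_submult|].
    pose proof (norm_ge0 y). pose proof (norm_ge0 (mul y (pw y n))). nra.
Qed.

(** L is closed under square roots: if y^2 is in L, the powers of y are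
    bounded (even powers lie in L, odd ones are y times an even one). *)
Lemma largest_sqrt_closed y : L (mul y y) -> L y.
Proof.
  intro Hyy. destruct HL as [_ [HLi [_ HLb]]]. destruct (bounded_pos L HLb) as [M [HM0 HM]].
  pose proof (norm_ge0 y). pose proof (norm_ge0 (one A)).
  assert (Heven : forall m, norm (pw (mul y y) m) <= M + norm (one A)).
  { intro m. destruct m; [simpl; lra|]. pose proof (HM _ (pw_in L _ m HLi Hyy)). lra. }
  apply (bounded_powers_in_largest y (M + norm y * (M + norm (one A)))). intro n.
  destruct (Nat.Even_or_Odd n) as [[m Hm]|[m Hm]].
  - replace (S n) with (S (m + m)) by lia. simpl pw. rewrite pw_double.
    eapply Rle_trans; [apply norm_submult|]. pose proof (Heven m).
    pose proof (norm_ge0 (pw (mul y y) m)). nra.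
  - replace (S n) with (S m + S m)%nat by lia. rewrite pw_double.
    pose proof (HM _ (pw_in L _ m HLi Hyy)). nra.
Qed.

Lemma largest_gauge_sq_ge x : gauge L x * gauge L x <= gauge L (mul x x).
Proof.
  destruct HL as [_ [_ [HLa _]]].
  apply Rle_of_forall_gt. intros s Hs.
  destruct (gauge_gt L HLa ball_in_largest _ s Hs) as [Hs0 HLs].
  set (t := sqrt s). assert (Htt : t * t = s) by (apply sqrt_sqrt; lra).
  assert (Ht0 : 0 < t) by (apply sqrt_lt_R0; lra).
  assert (Hy : L (scal (rs (/ t)) x)).
  { apply largest_sqrt_closed.
    rewrite scal_mull, scal_mulr, scal_rsM.
    replace (/ t * / t) with (/ s) by (rewrite <- Htt; field; lra). exact HLs. }
  assert (gauge L x <= t) by (apply (gauge_le L HLa ball_in_largest); split; auto).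
  pose proof (gauge_ge0 L HLa ball_in_largest x). nra.
Qed.

End Largest.

Theorem largest_good_set_gives_uniform_norm :
  has_largest_good_set A -> topology_defined_by_uniform_norm A.
Proof.
  intros [L [HL L_max]].
  pose proof HL as [_ [HLi [HLa HLb]]].
  pose proof (ball_in_largest L L_max) as HLball.
  destruct (bounded_pos L HLb) as [M [HM0 HM]].
  pose proof (norm_le_gauge L HLa HLball M HM0 HM) as Hnorm_le.
  exists (gauge L). split; [split; [split; [|split]|]|].
  - intros x Hx. apply norm_eq0. pose proof (Hnorm_le x). pose proof (norm_ge0 x).
    rewrite Hx in H. nra.
  - exact (gauge_tri L HLa HLball).
  - exact (gauge_scal L HLa HLball).
  - intro x. apply Rle_antisym.
    + exact (gauge_sq_le L HLa HLball HLi x).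
    + exact (largest_gauge_sq_ge L HL L_max x).
  - intro U. split.
    + apply (open_for_of_bound _ _ M); auto.
    + apply (open_for_of_bound _ _ 1); [lra|]. intro y.
      rewrite Rmult_1_l. apply (gauge_le_norm L HLa HLball).
Qed.

End Algebra.

Theorem theorem3p3 (A : normed_algebra) :
  functionally_continuous A ->
  (topology_defined_by_uniform_norm A <-> has_largest_good_set A).
Proof.
  intros _. split.
  - apply uniform_norm_has_largest_good_set.
  - apply largest_good_set_gives_uniform_norm.
Qed.
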